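(* Let $X$ be a compact metric space, $f\colon X\to X$ continuous, and $\bar x=(x_i)_{i\in\mathbb Z}$ a full orbit. For $k\in\mathbb N$ write $D_k=\overline{\{x_l: l\in\mathbb Z,\ k\nmid l\}}$. Then $$\mathrm{Per}(\bar x)=\{k\in\mathbb N:\exists N_0\in\mathbb N\ \text{with}\ x_{-N_0k}\notin D_k\},$$ $$\mathrm{Per}(\bar x)=\{k\in\mathbb N:\exists N_0\in\mathbb N\ \forall N\ge N_0\ \ x_{-Nk}\notin D_k\},$$ and $$\mathrm{Per}(\bar x)=\bigcup_{N=0}^{\infty}\{k\in\mathbb N: x_{-Nk}\notin D_k\}.$$
   Context: A full orbit is a sequence $\bar x=(x_i)_{i\in\mathbb Z}$ in $X$ with $f(x_i)=x_{i+1}$ for all $i$. $2^X$ is the space of nonempty closed subsets of $X$ with the Hausdorff metric, $2^f(C)=f(C)$. $\mathrm{Per}(\bar x)$ is the set of $k\in\mathbb N$ such that $\overline{\{x_{mk}:m\in\mathbb Z\}}$ is a periodic point of $2^f$ with fundamental period $k$. *)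

From HB Require Import structures.
From mathcomp Require Import all_boot all_order all_algebra.
From mathcomp Require Import all_classical all_reals all_analysis.
Set Implicit Arguments. Unset Strict Implicit. Unset Printing Implicit Defensive.
Import Order.TTheory GRing.Theory Num.Theory.
Local Open Scope classical_set_scope.
Local Open Scope ring_scope.

Definition full_orbit (X : Type) (f : X -> X) (x : int -> X) : Prop :=
  forall i : int, f (x i) = x (i + 1).

Definition hyper_map (X : Type) (f : X -> X) (C : set X) : set X := f @` C.

Definition hyper_periodic_fund (X : Type) (f : X -> X) (C : set X) (k : nat) : Prop :=
  (0 < k)%N /\ iter k (hyper_map f) C = C /\
  (forall j : nat, (0 < j)%N -> (j < k)%N -> iter j (hyper_map f) C <> C).

Definition orbit_sub_closure (X : topologicalType) (x : int -> X) (k : nat) : set X :=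
  closure [set x (m * (k%:Z)) | m in [set: int]].

Definition Per (X : topologicalType) (f : X -> X) (x : int -> X) : set nat :=
  [set k : nat | hyper_periodic_fund f (orbit_sub_closure x k) k].

Definition Dk (X : topologicalType) (x : int -> X) (k : nat) : set X :=
  closure [set x l | l in [set l : int | ~~ ((k%:Z) %| l)%Z]].

From HB Require Import structures.
From mathcomp Require Import all_boot all_order all_algebra.
From mathcomp Require Import all_classical all_reals all_analysis.
From mathcomp Require Import zify.
Set Implicit Arguments. Unset Strict Implicit.
Import Order.TTheory GRing.Theory Num.Theory.
Local Open Scope classical_set_scope.
Local Open Scope ring_scope.

(* Let B_n be the closure of {x_(mk+n) : m in Z}.  Compactness gives
   f(B_n) = B_(n+1), and B_(n+k) = B_n, so B_0 always has period k under 2^f,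
   while D_k is the union of B_1, ..., B_(k-1).  A point x_(-Nk) outside D_k
   lies in B_0 but in no B_j with 0 < j < k, so the period is exactly k.
   Conversely, if every x_(-Nk) lies in D_k, one B_j (0 < j < k) contains
   x_(-Nk) for infinitely many N; pushing these points forward by multiples
   of k gives B_0 ⊆ B_j, hence B_j ⊆ B_2j ⊆ ... ⊆ B_kj = B_0 and B_j = B_0.
   Finally D_k is f^k-invariant, so once x_(-N_0 k) avoids D_k, so does every
   x_(-Nk) with N >= N_0. *)

Lemma image_closure_compact (T U : topologicalType) (h : T -> U) (S : set T) :
  compact [set: T] -> hausdorff_space U -> continuous h ->
  h @` closure S = closure (h @` S).
Proof.
move=> cT hU ch; apply/seteqP; split.
  have cl : closed (h @^-1` closure (h @` S)).
    by apply: preimage_closed; [move=> ? ?; exact: ch | exact: closed_closure].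
  have : closure S `<=` h @^-1` closure (h @` S).
    rewrite closureE; apply: smallest_sub cl _ => y Sy.
    by apply: subset_closure; exists y.
  by move=> sub _ [z /sub hz <-].
have cmp : compact (h @` closure S).
  apply: (continuous_compact (continuous_subspaceT ch)).
  exact: (subclosed_compact (@closed_closure _ _) cT).
rewrite closureE; apply: smallest_sub (compact_closed hU cmp) _.
by move=> _ [z Sz <-]; exists z => //; apply: subset_closure.
Qed.

Lemma infinite_set_of_cover_nat (I : Type) (J : set I) (F : I -> set nat) :
  finite_set J -> [set: nat] `<=` \bigcup_(j in J) F j ->
  exists2 j, J j & infinite_set (F j).
Proof.
move=> finJ cover; apply: contrapT => /forall2NP noinf.
apply: infinite_nat; apply: sub_finite_set cover _.
apply: bigcup_finite => // j Jj.
by case: (noinf j) => // /contrapT.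
Qed.

Lemma infinite_set_nat_unbounded (A : set nat) :
  infinite_set A -> forall N, exists2 N', (N <= N')%N & A N'.
Proof.
move=> infA N; apply: contrapT => /forall2NP small; apply: infA.
apply: sub_finite_set (finite_II N) => n An /=.
by case: (small n) => // /negP; rewrite -ltnNge.
Qed.

Lemma iter_hyper_mapE (X : Type) (f : X -> X) (i : nat) (A : set X) :
  iter i (hyper_map f) A = iter i f @` A.
Proof.
elim: i => [|i IH]; first exact/esym/image_id.
by rewrite iterS IH /hyper_map image_comp.
Qed.

Lemma finite_set_ltn_gt0 (k : nat) : finite_set [set j | (0 < j < k)%N].
Proof. by apply: sub_finite_set (finite_II k) => j /andP[]. Qed.

Section OrbitClasses.

Variables (X : topologicalType) (f : X -> X) (x : int -> X).
Hypothesis orbit_x : full_orbit f x.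

Lemma full_orbit_iter (n : nat) (i : int) : iter n f (x i) = x (i + n%:Z).
Proof.
elim: n => [|n IH]; first by rewrite addr0.
by rewrite iterS IH orbit_x; congr x; lia.
Qed.

Definition orbit_class_closure (k n : nat) : set X :=
  closure [set x (m * k%:Z + n%:Z) | m in [set: int]].

Local Notation B := orbit_class_closure.

Lemma orbit_sub_closureE (k : nat) : orbit_sub_closure x k = B k 0.
Proof.
by congr closure; apply/seteqP; split=> _ [m _ <-]; exists m; rewrite ?addr0.
Qed.

Lemma orbit_class_closureDmul (k n c : nat) : B k (n + c * k) = B k n.
Proof.
congr closure; apply/seteqP; split=> _ [m _ <-].
  by exists (m + c%:Z) => //; congr x; lia.
by exists (m - c%:Z) => //; congr x; lia.
Qed.

Lemma Dk_eq_bigcup (k : nat) : (0 < k)%N ->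
  Dk x k = \bigcup_(j in [set j | (0 < j < k)%N]) B k j.
Proof.
move=> k_gt0; apply/seteqP; split.
  have cl : closed (\bigcup_(j in [set j | (0 < j < k)%N]) B k j).
    apply: closed_bigcup (finite_set_ltn_gt0 k) _ => j _.
    exact: closed_closure.
  rewrite /Dk closureE; apply: smallest_sub cl _ => _ [l /negP kNl <-].
  have kz : k%:Z != 0 by lia.
  have r_ge0 := modz_ge0 l kz.
  have r_ltk : (l %% k%:Z < k%:Z)%Z by apply: ltz_pmod; lia.
  have r_neq0 : (l %% k%:Z)%Z != 0 by apply: contra_notN kNl => /eqP/dvdz_mod0P.
  exists `|(l %% k%:Z)%Z|%N; first by apply/andP; split; lia.
  apply: subset_closure; exists (l %/ k%:Z)%Z => //.
  by rewrite [in RHS](divz_eq l k%:Z); congr x; lia.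
move=> p [j /andP[j_gt0 j_ltk]]; apply: closureS => _ [m _ <-].
exists (m * k%:Z + j%:Z) => //=.
by rewrite rpredDl ?dvdz_mull ?dvdzz // dvdzE /= gtnNdvd.
Qed.

Hypotheses (compact_X : compact [set: X]) (hausdorff_X : hausdorff_space X).
Hypothesis continuous_f : continuous f.

Lemma hyper_map_orbit_class (k n : nat) : hyper_map f (B k n) = B k n.+1.
Proof.
rewrite /hyper_map image_closure_compact //; congr closure.
apply/seteqP; split.
  by move=> _ [_ [m _ <-] <-]; exists m => //; rewrite orbit_x; congr x; lia.
move=> _ [m _ <-]; exists (x (m * k%:Z + n%:Z)); first by exists m.
by rewrite orbit_x; congr x; lia.
Qed.

Lemma iter_hyper_map_orbit_class (k n i : nat) :
  iter i (hyper_map f) (B k n) = B k (n + i).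
Proof.
elim: i => [|i IH]; first by rewrite addn0.
by rewrite iterS IH hyper_map_orbit_class addnS.
Qed.

Lemma orbit_class_iter (k n i : nat) (p : X) :
  B k n p -> B k (n + i) (iter i f p).
Proof. by rewrite -iter_hyper_map_orbit_class iter_hyper_mapE; exists p. Qed.

Lemma Dk_iter_mul (k c : nat) (p : X) : Dk x k p -> Dk x k (iter (c * k) f p).
Proof.
have [->|k_gt0] := posnP k; first by rewrite muln0.
rewrite !Dk_eq_bigcup // => -[j Jj Bp]; exists j => //.
by rewrite -(orbit_class_closureDmul k j c); apply: orbit_class_iter.
Qed.

Lemma notin_Dk_ge (k N0 N : nat) : (N0 <= N)%N ->
  ~ Dk x k (x (- (N0%:Z * k%:Z))) -> ~ Dk x k (x (- (N%:Z * k%:Z))).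
Proof.
move=> le_N0N notD DN; apply: notD.
have := Dk_iter_mul (c := (N - N0)%N) DN.
by rewrite full_orbit_iter; congr (Dk x k (x _)); nia.
Qed.

Lemma PerE (k : nat) : (0 < k)%N ->
  Per f x k <-> forall j, (0 < j < k)%N -> B k j <> B k 0.
Proof.
move=> k_gt0; rewrite /Per /hyper_periodic_fund /= orbit_sub_closureE.
have itB i : iter i (hyper_map f) (B k 0) = B k i.
  by rewrite iter_hyper_map_orbit_class add0n.
have BkE : B k k = B k 0.
  by have := orbit_class_closureDmul k 0 1; rewrite mul1n.
split=> [[_ [_ fund]] j /andP[j_gt0 j_ltk]|fund].
  by rewrite -itB; apply: fund.
split=> //; rewrite itB BkE; split=> // j j_gt0 j_ltk.
by rewrite itB; apply: fund; apply/andP.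
Qed.

Lemma orbit_class_eq0_of_sub (k j : nat) : (0 < k)%N ->
  B k 0 `<=` B k j -> B k j = B k 0.
Proof.
move=> k_gt0 sub0.
have shift i : B k i `<=` B k (i + j).
  have := image_subset (iter i f) sub0.
  by rewrite -!iter_hyper_mapE !iter_hyper_map_orbit_class add0n addnC.
have chain c : B k j `<=` B k (c.+1 * j).
  elim: c => [|c IH]; first by rewrite mul1n.
  by apply: subset_trans IH _; rewrite [(c.+2 * j)%N]mulSn addnC; apply: shift.
apply/seteqP; split=> //.
have := chain k.-1.
by rewrite prednK // mulnC -[(j * k)%N]add0n orbit_class_closureDmul.
Qed.

Lemma orbit_class_sub_of_unbounded (k j : nat) :
  (forall N, exists2 N', (N <= N')%N & B k j (x (- (N'%:Z * k%:Z)))) ->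
  B k 0 `<=` B k j.
Proof.
move=> unbounded; rewrite [X in X `<=` _]closureE.
apply: smallest_sub (@closed_closure _ _) _ => _ [m _ <-].
have [N' le_mN' BjN'] := unbounded `|m|%N.
have := orbit_class_iter (i := (`|(N'%:Z + m)%R|%N * k)%N) BjN'.
rewrite orbit_class_closureDmul full_orbit_iter; congr (B k j (x _)); lia.
Qed.

Lemma Per_notin_Dk (k : nat) : (0 < k)%N ->
  Per f x k <-> exists N : nat, ~ Dk x k (x (- (N%:Z * k%:Z))).
Proof.
move=> k_gt0; rewrite PerE //; split=> [fund|[N notD] j Jj eqB].
  apply: contrapT => /forallNP inDk.
  have cover : [set: nat] `<=` \bigcup_(j in [set j | (0 < j < k)%N])
                                 [set N | B k j (x (- (N%:Z * k%:Z)))].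
    move=> N _; have := inDk N.
    by rewrite Dk_eq_bigcup // => /contrapT[j Jj ?]; exists j.
  have [j Jj infj] := infinite_set_of_cover_nat (finite_set_ltn_gt0 k) cover.
  apply: (fund j Jj); apply: orbit_class_eq0_of_sub k_gt0 _.
  exact/orbit_class_sub_of_unbounded/infinite_set_nat_unbounded.
apply: notD; rewrite Dk_eq_bigcup //; exists j => //; rewrite eqB.
by apply: subset_closure; exists (- N%:Z) => //; congr x; lia.
Qed.

End OrbitClasses.

Theorem lemma4p6 (R : realType) (X : metricType R) (f : X -> X)
  (x : int -> X) :
  compact [set: X] -> continuous f -> full_orbit f x ->
  Per f x = [set k : nat | (0 < k)%N /\
              exists N0 : nat, ~ Dk x k (x (- (N0%:Z * k%:Z))) ] /\
  Per f x = [set k : nat | (0 < k)%N /\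
              exists N0 : nat, forall N : nat, (N0 <= N)%N ->
                ~ Dk x k (x (- (N%:Z * k%:Z))) ] /\
  Per f x = \bigcup_(N in [set: nat])
              [set k : nat | (0 < k)%N /\ ~ Dk x k (x (- (N%:Z * k%:Z))) ].
Proof.
move=> compact_X continuous_f orbit_x.
have hausdorff_X := @metric_hausdorff R X.
have PerP := Per_notin_Dk orbit_x compact_X hausdorff_X continuous_f.
have E1 : Per f x = [set k : nat | (0 < k)%N /\
              exists N0 : nat, ~ Dk x k (x (- (N0%:Z * k%:Z))) ].
  apply/seteqP; split=> k /=; last by move=> [k_gt0 ?]; apply/PerP.
  move=> Pk; have k_gt0 : (0 < k)%N by case: Pk.
  by split=> //; apply/PerP.
split=> //; rewrite E1; split; apply/seteqP; split=> k /=.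
- move=> [k_gt0 [N0 notD]]; split=> //; exists N0 => N le_N0N.
  exact: (notin_Dk_ge orbit_x compact_X hausdorff_X continuous_f le_N0N).
- by move=> [k_gt0 [N0 notD]]; split=> //; exists N0; apply: notD.
- by move=> [k_gt0 [N0 notD]]; exists N0.
- by move=> [N0 _ [k_gt0 notD]]; split=> //; exists N0.
Qed.
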